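(* Let $T$ be a tree and let $v\in V(T)$. Then there exists a constant $C=C(T)$ with the following property. Let $n$ be a positive integer and let $G$ be a bipartite graph with parts $X$ and $Y$, each of size at most $n$, such that $G$ contains at least $Cn^2$ copies of $K_{2,2}$. Then $G$ contains a copy of $T[2]$ in which the two vertices corresponding to $v$ are embedded in $X$.
   Context: For a graph $F$, the $2$-blowup $F[2]$ is obtained by replacing each vertex $u$ of $F$ by an independent set of two vertices (the two images of $u$) and each edge by a copy of $K_{2,2}$ between the corresponding sets. A copy of $K_{2,2}$ means a subgraph of $G$ isomorphic to $K_{2,2}$. *)

From mathcomp Require Import all_boot.
Set Implicit Arguments. Unset Strict Implicit. Unset Printing Implicit Defensive.

Definition simple_graph (T : finType) (e : rel T) : Prop :=
  symmetric e /\ irreflexive e.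

(* A cycle: a duplicate-free closed walk x :: p of length >= 3. *)
Definition has_cycle (T : finType) (e : rel T) : Prop :=
  exists (x : T) (p : seq T),
    [/\ path e x p, uniq (x :: p), 2 <= size p & e (last x p) x].

Definition is_tree (T : finType) (e : rel T) : Prop :=
  [/\ simple_graph e, 0 < #|T|, (forall x y, connect e x y) & ~ has_cycle e].

Definition bipartite_with_parts (V : finType) (e : rel V) (X Y : {set V}) : Prop :=
  [/\ simple_graph e, X :&: Y = set0, X :|: Y = setT &
      forall x y, e x y -> (x \in X) && (y \in Y) || (x \in Y) && (y \in X)].

(* Copies of K_{2,2} in G: a subgraph isomorphic to K_{2,2} is determined by the
   unordered pair {A, B} of its two (disjoint) sides, each of size 2, with all
   edges between A and B present. *)
Definition K22_copies (V : finType) (e : rel V) : {set {set {set V}}} :=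
  [set P : {set {set V}} | [exists A : {set V}, exists B : {set V},
     [&& P == [set A; B], #|A| == 2, #|B| == 2, [disjoint A & B] &
         [forall a in A, forall b in B, e a b]]]].

(* A copy of the 2-blowup T[2] in G: an injective map from V(T) x bool
   (the two images of each vertex) into V(G) such that for each edge uw of T,
   all four pairs of images are adjacent in G. *)
Definition blowup2_embedding (T V : finType) (eT : rel T) (e : rel V)
    (f : T * bool -> V) : Prop :=
  injective f /\ forall u w i j, eT u w -> e (f (u, i)) (f (w, j)).

From mathcomp Require Import all_boot zify.
Set Implicit Arguments. Unset Strict Implicit. Unset Printing Implicit Defensive.

(* Consider the auxiliary graph on the 2-subsets of V(G) in which two pairs are adjacent
   when they are disjoint and span a K_{2,2}.  Every copy of K_{2,2} is an edge of it, and
   a pair P with common neighbourhood N(P) has at least C(|N(P)|, 2) neighbours.  Hence,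
   with s = |V(T[2])| and Cn^2 copies of K_{2,2}, the degree sum exceeds twice the total
   weight of the pairs, the weight of P being s|N(P)| + 1, and repeatedly deleting a pair
   whose degree is below its weight leaves a nonempty family G in which every pair P has
   more than s|N(P)| neighbours.  Since the neighbours of P all lie inside N(P), at most
   |S||N(P)| of them meet a set S, so every pair of G has a neighbour in G avoiding any s
   given vertices.  Two adjacent pairs lie on opposite sides of the bipartition, so some
   pair of G lies in X; it is the image of v, and T[2] is embedded greedily along the
   tree, each new vertex of T going to a fresh pair of G adjacent to the image of its
   unique already embedded neighbour. *)

Section Degrees.
Variables (I : finType) (r : rel I).
Hypothesis r_sym : symmetric r.
Implicit Types F G : {set I}.

Definition deg_in F i := #|[set j in F | r i j]|.

Definition degsum F := \sum_(i in F) deg_in F i.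

Lemma deg_inE F i : deg_in F i = \sum_(j in F) r i j.
Proof.
rewrite /deg_in -sum1_card big_mkcond [RHS]big_mkcond /=.
by apply: eq_bigr => j _; rewrite inE; case: (j \in F); case: (r i j).
Qed.

Lemma degsum_setD1 F i : i \in F -> degsum F <= degsum (F :\ i) + 2 * deg_in F i.
Proof.
move=> iF; rewrite /degsum (big_setD1 i iF) /=.
have split_deg j : j \in F :\ i -> deg_in F j = r j i + deg_in (F :\ i) j.
  by move=> _; rewrite !deg_inE (big_setD1 i iF).
rewrite (eq_bigr _ split_deg) big_split /=.
have : \sum_(j in F :\ i) r j i <= deg_in F i.
  rewrite deg_inE [X in _ <= X](big_setD1 i iF) /=.
  by under eq_bigr do rewrite r_sym; rewrite leq_addl.
lia.
Qed.

Lemma exists_subset_deg_ge (w : I -> nat) F :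
  2 * \sum_(i in F) w i < degsum F ->
  exists G, [/\ G \subset F, G != set0 & forall i, i \in G -> w i <= deg_in G i].
Proof.
(* A minimal heavy subset cannot contain a vertex of degree below its weight. *)
pose heavy := [pred G : {set I} | 2 * \sum_(i in G) w i < degsum G].
move=> heavyF; have [G /minsetP[heavyG minG] GF] := minset_exists (heavyF : heavy F).
exists G; split=> //.
  by apply: contraTneq heavyG => ->; rewrite inE /degsum !big_set0.
move=> i iG; rewrite leqNgt; apply/negP => light_i.
suff /minG /(_ (subD1set G i)) /setP /(_ i) : heavy (G :\ i) by rewrite !inE eqxx iG.
move: heavyG; rewrite !inE (big_setD1 i iG) /=.
have := degsum_setD1 iG; lia.
Qed.

End Degrees.

Lemma leq_card_bigcup (I T : finType) (A : {pred I}) (F : I -> {set T}) :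
  #|\bigcup_(i in A) F i| <= \sum_(i in A) #|F i|.
Proof.
apply: (big_ind2 (fun (U : {set T}) n => #|U| <= n)) => [|U1 n1 U2 n2 le1 le2|//].
  by rewrite cards0.
by apply: leq_trans (leq_card_setU U1 U2) _; apply: leq_add.
Qed.

Lemma leq_imset2_card (aT aT2 rT : finType) (f : aT -> aT2 -> rT)
    (A : {set aT}) (B : {set aT2}) :
  #|f @2: (A, B)| <= #|A| * #|B|.
Proof. by rewrite curry_imset2X -cardsX leq_imset_card. Qed.

Section PairGraph.
Variables (V : finType) (e : rel V).
Hypotheses (e_sym : symmetric e) (e_irr : irreflexive e).
Implicit Types (P Q S : {set V}) (G : {set {set V}}).

Definition common_nbhd P := [set y | [forall p in P, e p y]].

Definition pair_adj P Q :=
  [&& #|P| == 2, #|Q| == 2, [disjoint P & Q] & [forall p in P, forall q in Q, e p q]].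

Definition two_sets := [set P : {set V} | #|P| == 2].

Definition pair_extendable s G :=
  forall P S, P \in G -> #|S| <= s ->
  exists2 Q, Q \in G & pair_adj P Q && [disjoint Q & S].

Lemma pair_adjC : symmetric pair_adj.
Proof.
suff imp P Q : pair_adj P Q -> pair_adj Q P by move=> P Q; apply/idP/idP; apply: imp.
case/and4P=> P2 Q2 PQ /forall_inP adjPQ; rewrite /pair_adj Q2 P2 disjoint_sym PQ /=.
apply/forall_inP=> q qQ; apply/forall_inP=> p pP.
by rewrite e_sym; move/forall_inP: (adjPQ p pP); apply.
Qed.

Lemma pair_adj_sub_common_nbhd P Q : pair_adj P Q -> Q \subset common_nbhd P.
Proof.
case/and4P=> _ _ _ /forall_inP adjPQ; apply/subsetP=> q qQ; rewrite inE.
by apply/forall_inP=> p /adjPQ /forall_inP; apply.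
Qed.

Lemma card_K22_copies_le : #|K22_copies e| <= degsum pair_adj two_sets.
Proof.
pose copies_at P := [set [set P; Q] | Q in [set Q in two_sets | pair_adj P Q]].
apply: leq_trans (_ : #|\bigcup_(P in two_sets) copies_at P| <= _).
  apply/subset_leq_card/subsetP=> K; rewrite inE.
  case/existsP=> A /existsP[B /and5P[/eqP-> A2 B2 AB adjAB]].
  apply/bigcupP; exists A; rewrite ?inE //.
  by apply: imset_f; rewrite !inE B2 /pair_adj A2 B2 AB.
apply: leq_trans (leq_card_bigcup _ _) _.
by apply: leq_sum => P _; apply: leq_imset_card.
Qed.

Lemma bin2_common_nbhd_le_deg P :
  P \in two_sets -> 'C(#|common_nbhd P|, 2) <= deg_in pair_adj two_sets P.
Proof.
rewrite inE => P2; rewrite -cards_draws; apply/subset_leq_card/subsetP=> Q.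
rewrite !inE => /andP[/subsetP QN Q2]; rewrite Q2 /pair_adj P2 Q2 /=.
have adjPQ p q : p \in P -> q \in Q -> e p q.
  by move=> pP /QN; rewrite inE => /forall_inP; apply.
apply/andP; split.
  rewrite -setI_eq0; apply/eqP/setP=> x; rewrite !inE.
  by apply/negP=> /andP[xP xQ]; have := adjPQ x x xP xQ; rewrite e_irr.
by apply/forall_inP=> p pP; apply/forall_inP=> q; apply: adjPQ.
Qed.

Lemma card_pair_adj_meeting_le G P S :
  #|[set Q in G | pair_adj P Q & ~~ [disjoint Q & S]]| <= #|S| * #|common_nbhd P|.
Proof.
apply: leq_trans (leq_imset2_card (fun z y => [set z; y]) _ _).
apply/subset_leq_card/subsetP=> Q; rewrite !inE => /and3P[_ adjPQ].
rewrite -setI_eq0 => /set0Pn[z /setIP[zQ zS]].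
have /subsetP QN := pair_adj_sub_common_nbhd adjPQ.
case/and4P: adjPQ => _ /cards2P[q1 [q2 [_ defQ]]] _ _.
have q1N : q1 \in common_nbhd P by apply: QN; rewrite defQ !inE eqxx.
have q2N : q2 \in common_nbhd P by apply: QN; rewrite defQ !inE eqxx orbT.
move: zQ; rewrite defQ !inE => /orP[]/eqP zq; rewrite zq in zS.
  by apply/imset2P; exists q1 q2.
by apply/imset2P; exists q2 q1; rewrite // setUC.
Qed.

Lemma pair_extendable_deg s G :
  (forall P, P \in G -> s * #|common_nbhd P| < deg_in pair_adj G P) ->
  pair_extendable s G.
Proof.
move=> deg_large P S PG leSs.
have [/exists_inP[Q QG adjQS] | /exists_inPn none] :=
  boolP [exists Q in G, pair_adj P Q && [disjoint Q & S]]; first by exists Q.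
suff : deg_in pair_adj G P <= s * #|common_nbhd P| by rewrite leqNgt deg_large.
apply: leq_trans (_ : #|[set Q in G | pair_adj P Q & ~~ [disjoint Q & S]]| <= _).
  apply/subset_leq_card/subsetP=> Q; rewrite !inE => /andP[QG adjPQ].
  by have := none Q QG; rewrite QG adjPQ.
exact: leq_trans (card_pair_adj_meeting_le _ _ _) (leq_mul leSs (leqnn _)).
Qed.

Lemma exists_pair_extendable s c :
  (forall d, 4 * (s * d + 1) <= c + 'C(d, 2)) ->
  c * #|two_sets| < #|K22_copies e| ->
  exists2 G, G != set0 & pair_extendable s G.
Proof.
move=> weight_le dense; pose w P := s * #|common_nbhd P| + 1.
have sum_w : 4 * \sum_(P in two_sets) w P <= c * #|two_sets| + degsum pair_adj two_sets.
  rewrite big_distrr (mulnC c) -sum_nat_const /degsum -big_split /=.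
  apply: leq_sum => P P2.
  exact: leq_trans (weight_le _) (leq_add (leqnn c) (bin2_common_nbhd_le_deg P2)).
have [|G [_ G0 degG]] := exists_subset_deg_ge pair_adjC (w := w) (F := two_sets).
  by have := card_K22_copies_le; lia.
exists G => //; apply: pair_extendable_deg => P PG.
by rewrite -addn1 degG.
Qed.

End PairGraph.

Section Bipartite.
Variables (V : finType) (e : rel V) (X Y : {set V}).
Hypothesis bip : bipartite_with_parts e X Y.

Lemma bipartite_edge_sides x y : e x y -> (x \in X) = (y \notin X).
Proof.
case: bip => _ /eqP; rewrite setI_eq0 => disjXY _ crossing /crossing.
case/orP=> /andP[xS yS]; first by rewrite xS (disjointFl disjXY yS).
by rewrite yS (disjointFl disjXY xS).
Qed.

Lemma pair_adj_sides P Q : pair_adj e P Q -> (P \subset X) || (Q \subset X).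
Proof.
case/and4P=> /cards2P[p [p2 [_ defP]]] /cards2P[q [q2 [_ defQ]]] _ /forall_inP adjPQ.
have sides p' q' : p' \in P -> q' \in Q -> (p' \in X) = (q' \notin X).
  by move=> p'P q'Q; apply: bipartite_edge_sides; move/forall_inP: (adjPQ p' p'P); apply.
have pP : p \in P by rewrite defP !inE eqxx.
have qQ : q \in Q by rewrite defQ !inE eqxx.
have [pX | pNX] := boolP (p \in X).
  by apply/orP; left; apply/subsetP=> p' p'P; rewrite (sides p' q) // -(sides p q).
apply/orP; right; apply/subsetP=> q' q'Q; move: pNX.
by rewrite (sides p q') // negbK.
Qed.

Lemma exists_pair_in_part s G :
  G != set0 -> pair_extendable e s G ->
  exists x1 x2, [/\ x1 != x2, [set x1; x2] \in G, x1 \in X & x2 \in X].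
Proof.
case/set0Pn=> P PG /(_ P set0 PG); rewrite cards0 => /(_ isT)[Q QG /andP[adjPQ _]].
have [R [RG R2 RX]] : exists R, [/\ R \in G, #|R| == 2 & R \subset X].
  have [P2 Q2] : #|P| == 2 /\ #|Q| == 2 by case/and4P: adjPQ.
  by case/orP: (pair_adj_sides adjPQ) => ?; [exists P | exists Q].
case/cards2P: R2 => x1 [x2 [x12 defR]]; exists x1, x2; rewrite -defR.
by split=> //; apply: (subsetP RX); rewrite defR !inE eqxx ?orbT.
Qed.

Lemma card_bipartite : #|V| = #|X| + #|Y|.
Proof.
case: bip => _ XY0 XYT _.
by rewrite -cardsT -XYT cardsU XY0 cards0 subn0.
Qed.

End Bipartite.

Section TreeGrowth.
Variables (T : finType) (eT : rel T).
Implicit Types A : {set T}.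

Definition induced_connected A :=
  {in A &, forall x y, connect [rel x y in A | eT x y] x y}.

Lemma connect_cross_edge A x y :
  connect eT x y -> x \in A -> y \notin A ->
  exists a b, [/\ a \in A, b \notin A & eT a b].
Proof.
case/connectP=> p + ->; elim: p x => [|z p IHp] x /= => [_ -> //|/andP[exz zp] xA yNA].
have [zA | zNA] := boolP (z \in A); first exact: IHp zp zA yNA.
by exists x, z.
Qed.

Lemma induced_connected_setU1 A a w :
  symmetric eT -> induced_connected A -> a \in A -> eT a w ->
  induced_connected (w |: A).
Proof.
move=> eT_sym Aconn aA eaw.
have widen x y : connect [rel x y in A | eT x y] x y ->
    connect [rel x y in w |: A | eT x y] x y.
  apply: connect_sub => x' y' /andP[/andP[x'A y'A] ex'y']; apply: connect1.
  by rewrite /= !inE x'A y'A ex'y' !orbT.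
have to_a x : x \in w |: A -> connect [rel x y in w |: A | eT x y] x a.
  case/setU1P=> [-> | xA]; last exact/widen/Aconn.
  by apply: connect1; rewrite /= !inE eqxx aA orbT eT_sym.
have from_a x : x \in w |: A -> connect [rel x y in w |: A | eT x y] a x.
  case/setU1P=> [-> | xA]; last exact/widen/Aconn.
  by apply: connect1; rewrite /= !inE eqxx aA orbT.
by move=> x y xA yA; apply: connect_trans (to_a x xA) (from_a y yA).
Qed.

Lemma induced_path_sub A x p : path [rel x y in A | eT x y] x p -> {subset p <= A}.
Proof.
elim: p x => [|y p IHp] x //= /andP[/andP[/andP[_ yA] _] /IHp sub_pA] z.
by case/predU1P=> [-> | /sub_pA].
Qed.

Lemma acyclic_unique_nbr A w a b :
  symmetric eT -> ~ has_cycle eT -> connect [rel x y in A | eT x y] a b ->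
  w \notin A -> a \in A -> eT w a -> eT w b -> a = b.
Proof.
move=> eT_sym acyclic /connectP[p pth ->] wNA aA ewa.
case: (shortenP pth) => [[|z p'] pth' uniq_p' _] //= ewl; case: acyclic.
exists w, [:: a, z & p']; split=> //.
- by apply/andP; split; last by apply: sub_path pth' => x y /andP[_ ->].
- rewrite cons_uniq uniq_p' andbT; apply: contra wNA => /predU1P[-> // | wp'].
  exact: induced_path_sub pth' _ wp'.
- by rewrite eT_sym.
Qed.

Lemma tree_exit_edge A x :
  is_tree eT -> induced_connected A -> x \in A -> A != setT ->
  exists a w, [/\ a \in A, w \notin A, eT a w & forall b, b \in A -> eT w b -> b = a].
Proof.
case=> [[eT_sym _] _ conn acyclic] Aconn xA.
rewrite -properT => /properP[_ [y _ yNA]].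
have [a [w [aA wNA eaw]]] := connect_cross_edge (conn x y) xA yNA.
have ewa : eT w a by rewrite eT_sym.
exists a, w; split=> // b bA ewb; apply/esym.
exact: acyclic_unique_nbr eT_sym acyclic (Aconn a b aA bA) wNA aA ewa ewb.
Qed.

End TreeGrowth.

Section GreedyEmbedding.
Variables (T : finType) (eT : rel T) (v : T).
Hypothesis tree : is_tree eT.
Variables (V : finType) (e : rel V) (G : {set {set V}}) (x1 x2 : V).
Hypothesis e_sym : symmetric e.
Hypothesis G_ext : pair_extendable e #|{: T * bool}| G.

Record partial_embedding (A : {set T}) (f : T * bool -> V) : Prop := PartialEmbedding {
  pemb_root : v \in A;
  pemb_root_false : f (v, false) = x1;
  pemb_root_true : f (v, true) = x2;
  pemb_pair : forall a, a \in A -> [set f (a, false); f (a, true)] \in G;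
  pemb_inj : {in [set ub | ub.1 \in A] &, injective f};
  pemb_edge : forall a b i j, a \in A -> b \in A -> eT a b -> e (f (a, i)) (f (b, j));
  pemb_connected : induced_connected eT A }.

Lemma partial_embedding_root :
  x1 != x2 -> [set x1; x2] \in G ->
  partial_embedding [set v] (fun ub => if ub.2 then x2 else x1).
Proof.
move=> x12 x12G; have [[_ eT_irr] _ _ _] := tree.
split=> //; first exact: set11.
- move=> [a i] [b j]; rewrite !inE /= => /eqP-> /eqP->.
  by case: i; case: j => // /eqP; rewrite ?(negbTE x12) // eq_sym (negbTE x12).
- by move=> a b i j /set1P-> /set1P->; rewrite eT_irr.
- by move=> a b /set1P-> /set1P->; apply: connect0.
Qed.

Lemma extend_partial_embedding A f :
  partial_embedding A f -> A != setT ->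
  exists w f', w \notin A /\ partial_embedding (w |: A) f'.
Proof.
case=> vA fv1 fv2 fG finj fedge Aconn AT; have [[eT_sym eT_irr] _ _ _] := tree.
have [a [w [aA wNA eaw uniq_a]]] := tree_exit_edge tree Aconn vA AT.
pose used := f @: [set ub | ub.1 \in A].
have used_small : #|used| <= #|{: T * bool}|.
  exact: leq_trans (leq_imset_card _ _) (max_card _).
have [Q QG /andP[adjQ Qfree]] := G_ext (fG a aA) used_small.
case/and4P: adjQ => _ /cards2P[q1 [q2 [q12 defQ]]] _ /forall_inP adj_aQ.
pose q i := if i then q2 else q1.
pose f' ub := if ub.1 == w then q ub.2 else f ub.
have f'A ub : ub.1 \in A -> f' ub = f ub.
  by rewrite /f'; case: eqP => // ->; rewrite (negbTE wNA).
have f'w i : f' (w, i) = q i by rewrite /f' eqxx.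
have qQ i : q i \in Q by rewrite defQ; case: i; rewrite !inE eqxx ?orbT.
have q_inj : injective q.
  by move=> [] [] //= /eqP; rewrite ?(negbTE q12) // eq_sym (negbTE q12).
have q_unused i ub : ub.1 \in A -> q i != f ub.
  move=> ubA; apply/eqP=> qf; have := disjointFr Qfree (qQ i).
  by rewrite qf imset_f // inE.
have adj_aq i j : e (f (a, i)) (q j).
  have /adj_aQ /forall_inP : f (a, i) \in [set f (a, false); f (a, true)].
    by case: i; rewrite !inE eqxx ?orbT.
  by apply; apply: qQ.
exists w, f'; split=> //; split; rewrite ?f'A //.
- by rewrite setU1r.
- move=> b /setU1P[-> | bA]; first by rewrite !f'w /= -defQ.
  by rewrite !f'A ?fG.
- move=> [b i] [c j]; rewrite !inE /= => /predU1P[-> | bA] /predU1P[-> | cA].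
  + by rewrite !f'w => /q_inj->.
  + by rewrite f'w (f'A (c, j)) // => /eqP; rewrite (negbTE (q_unused i (c, j) cA)).
  + by rewrite f'w (f'A (b, i)) // => /esym/eqP; rewrite (negbTE (q_unused j (b, i) bA)).
  + by rewrite !f'A // => /finj; apply; rewrite inE.
- move=> b c i j /setU1P[-> | bA] /setU1P[-> | cA] ebc.
  + by rewrite eT_irr in ebc.
  + by rewrite (uniq_a c cA ebc) f'w (f'A (a, j)) // e_sym.
  + by rewrite eT_sym in ebc; rewrite (uniq_a b bA ebc) f'w (f'A (a, i)).
  + by rewrite !f'A //; apply: fedge.
- exact: induced_connected_setU1 eT_sym Aconn aA eaw.
Qed.

Lemma exists_blowup2_embedding :
  x1 != x2 -> [set x1; x2] \in G ->
  exists f, [/\ blowup2_embedding eT e f, f (v, false) = x1 & f (v, true) = x2].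
Proof.
move=> x12 x12G.
have grow k : k <= #|T| -> exists A f, partial_embedding A f /\ k <= #|A|.
  elim: k => [|k IHk] lekT.
    exists [set v], (fun ub => if ub.2 then x2 else x1).
    by split; first exact: partial_embedding_root.
  have [A [f [fA leA]]] := IHk (ltnW lekT).
  have [ltkA | leAk] := ltnP k #|A|; first by exists A, f.
  have AT : A != setT by apply: contraTneq lekT => AT; rewrite -leqNgt -cardsT -AT.
  have [w [f' [wNA f'A]]] := extend_partial_embedding fA AT.
  by exists (w |: A), f'; rewrite cardsU1 wNA add1n ltnS.
have [A [f [[_ fv1 fv2 _ finj fedge _] leTA]]] := grow #|T| (leqnn _).
have AT : A = setT by apply/eqP; rewrite eqEcard subsetT cardsT.
exists f; split=> //; split.
- by move=> ub ub'; apply: finj; rewrite inE AT in_setT.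
- by move=> a b i j; apply: fedge; rewrite AT.
Qed.

End GreedyEmbedding.

Lemma mul2_bin2 d : 2 * 'C(d, 2) = d * d.-1.
Proof. by rewrite -mul_bin_diag bin1. Qed.

Lemma weight_le_bin2 s d : 4 * (s * d + 1) <= 4 + 4 * s * (8 * s + 1) + 'C(d, 2).
Proof.
have := mul2_bin2 d; have [small | large] := leqP d (8 * s + 1).
  by have := leq_mul (leqnn s) small; lia.
have : d * (8 * s + 1) <= d * d.-1 by apply: leq_mul => //; lia.
nia.
Qed.

Theorem mainTheorem7 (T : finType) (eT : rel T) (v : T) :
  is_tree eT ->
  exists C : nat,
    forall (n : nat) (V : finType) (e : rel V) (X Y : {set V}),
      0 < n ->
      bipartite_with_parts e X Y ->
      #|X| <= n -> #|Y| <= n ->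
      C * n ^ 2 <= #|K22_copies e| ->
      exists f : T * bool -> V,
        blowup2_embedding eT e f /\ f (v, false) \in X /\ f (v, true) \in X.
Proof.
move=> tree; set s := #|{: T * bool}|; set c := 4 + 4 * s * (8 * s + 1).
exists (2 * c + 1) => n V e X Y n_gt0 bip leXn leYn dense.
have [[e_sym e_irr] _ _ _] := bip.
have few_pairs : c * #|two_sets V| < #|K22_copies e|.
  have leV : #|V| <= 2 * n by rewrite (card_bipartite bip); lia.
  have : 'C(2 * n, 2) <= 2 * n ^ 2 by have := mul2_bin2 (2 * n); nia.
  move/(leq_trans (leq_bin2l 2 leV))/(leq_mul (leqnn c)); rewrite card_draws.
  have : 0 < n ^ 2 by rewrite expn_gt0 n_gt0.
  nia.
have [G G0 G_ext] := exists_pair_extendable e_sym e_irr (weight_le_bin2 s) few_pairs.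
have [x1 [x2 [x12 x12G x1X x2X]]] := exists_pair_in_part bip G0 G_ext.
have [f [femb fv1 fv2]] := exists_blowup2_embedding v tree e_sym G_ext x12 x12G.
by exists f; rewrite fv1 fv2.
Qed.
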